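(* Let $\beta$ be an ordered partition of $N$ and $x\in X^\beta$. Then $\bar W_{[x]}=\bar W_{\beta(x)}$, where $\bar W_{[x]}=\{u\in\bar W: ux\bar W_\beta=x\bar W_\beta\}$ and $\bar W_{\beta(x)}$ is the subgroup of $\bar W$ generated by the reflections $s_{\alpha}$ with $\alpha\in\bar\Pi\cap x(\bar R_{\beta,+})$.
   Context: Fix $N\ge2$. $\bar P=\bigoplus_{i=1}^N\mathbb Z\epsilon_i$ with $(\epsilon_i,\epsilon_j)=\delta_{ij}$; $\bar R=\{\alpha_{ij}=\epsilon_i-\epsilon_j:i\ne j\}$, $\bar R_+=\{\alpha_{ij}:i<j\}$, $\alpha_i=\alpha_{i,i+1}$, $\bar\Pi=\{\alpha_1,\dots,\alpha_{N-1}\}$; $\bar P_-=\{\eta\in\bar P:(\eta,\alpha)\le0\ \forall\alpha\in\bar R_+\}$. $\bar W=\mathfrak S_N$ acts by permuting indices; $W=\bar W\ltimes\bar P$ with elements $wt_\eta$, $wt_\eta w^{-1}=t_{w(\eta)}$. Affine roots (with formal $\delta$): $R=\{\bar\alpha+k\delta:\bar\alpha\in\bar R,k\in\mathbb Z\}$, $R_+=\{\bar\alpha+k\delta:\bar\alpha\in\bar R_+,k\ge0\}\cup\{-\bar\alpha+k\delta:\bar\alpha\in\bar R_+,k>0\}$, $R_-=R\setminus R_+$; $W$ acts on $R$ by $w(\bar\alpha+k\delta)=w(\bar\alpha)+k\delta$, $t_\eta(\bar\alpha+k\delta)=\bar\alpha+(k-(\eta,\bar\alpha))\delta$ (so $\bar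 R\subset R$ and $x(\bar R_{\beta,+})\subset R$); $l(w)=\#(R_+\cap w^{-1}(R_-))$. An ordered partition $\beta$ of $N$ gives blocks of consecutive indices of sizes $\beta_1,\dots,\beta_r$; $\bar R_\beta=\{\alpha_{ij}:i,j\text{ in the same block}\}$, $\bar R_{\beta,+}=\bar R_\beta\cap\bar R_+$, $\bar W_\beta$ the subgroup generated by $s_{\alpha_i}$, $\alpha_i\in\bar R_\beta$; $W^\beta=\{w\in W:l(wu)\ge l(w)\ \forall u\in\bar W_\beta\}$, $\bar W^\beta=W^\beta\cap\bar W$. For $w\in\bar W^\beta$, $\eta_w\in\bar P_-$ is defined by $(\eta_w,\epsilon_1)=0$ and $(\eta_w,\alpha_i)=-1$ if $\alpha_i\in w(\bar R_+\setminus\bar R_{\beta,+})$, $0$ otherwise; $\bar P_-(w)=\{\eta+\eta_w:\eta\in\bar P_-\}$; $X^\beta=\{t_\eta w:w\in\bar W^\beta,\eta\in\bar P_-(w)\}$. *)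

From HB Require Import structures.
From mathcomp Require Import all_boot all_order all_algebra all_fingroup.
From mathcomp Require Import finmap boolp classical_sets cardinality.
Set Implicit Arguments. Unset Strict Implicit. Unset Printing Implicit Defensive.
Import GRing.Theory Num.Theory.
Local Open Scope ring_scope.

(* Indices 1..N of the paper are the ordinals 'I_N = {0,..,N-1}.           *)
(* Lattice bar P = Z^N : eta = sum_i eta i * eps_i.                         *)
Definition lat (N : nat) := {ffun 'I_N -> int}.

(* An element t_eta w of W = bar W |x bar P is the pair (eta, w).          *)
Definition Welt (N : nat) := (lat N * {perm 'I_N})%type.

(* w acts on bar P by w(eps_i) = eps_{w i}, so (w eta)_j = eta_{w^-1 j}.   *)
(* (t_eta w)(t_mu v) = t_{eta + w mu} (w o v).  Mathcomp's (v * w)%g is    *)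
(* "first v, then w", i.e. the composite w o v.                             *)
Definition wmul (N : nat) (x y : Welt N) : Welt N :=
  ([ffun j => x.1 j + y.1 (x.2^-1 j)%g], (y.2 * x.2)%g).

Definition emb (N : nat) (w : {perm 'I_N}) : Welt N := ([ffun _ => 0], w).

(* affine roots: (i, j, k) stands for alpha_ij + k delta, with i <> j *)
Definition aroot (N : nat) := ('I_N * 'I_N * int)%type.
Definition is_root (N : nat) (r : aroot N) : bool := r.1.1 != r.1.2.
Definition rpos (N : nat) (r : aroot N) : bool :=
  (((r.1.1 < r.1.2)%N && (0 <= r.2)) || ((r.1.2 < r.1.1)%N && (0 < r.2))).

(* (t_eta w)(alpha_ij + k delta) = alpha_{w i, w j} + (k - (eta, alpha_{w i, w j})) delta *)
Definition ract (N : nat) (x : Welt N) (r : aroot N) : aroot N :=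
  (x.2 r.1.1, x.2 r.1.2, r.2 - (x.1 (x.2 r.1.1) - x.1 (x.2 r.1.2))).

Definition inv_set (N : nat) (x : Welt N) : set (aroot N) :=
  fun r => is_root r /\ rpos r /\ ~~ rpos (ract x r).

(* l(x) = # (R_+ \cap x^{-1}(R_-))  (this set is finite) *)
Definition len (N : nat) (x : Welt N) : nat := #|` fset_set (inv_set x)|.

Definition ordered_partition (beta : seq nat) (N : nat) : bool :=
  all (fun b => (0 < b)%N) beta && (sumn beta == N).

Definition blk (beta : seq nat) (i : nat) : nat :=
  count (fun p => (p <= i)%N) (scanl addn 0%N beta).

(* bar W_beta, generated by s_{alpha_i} = tperm i (i+1) with alpha_i in bar R_beta *)
Definition Wbar_beta (N : nat) (beta : seq nat) : {set {perm 'I_N}} :=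
  <<[set s : {perm 'I_N} | [exists i : 'I_N, exists j : 'I_N,
      [&& (j == i.+1 :> nat), blk beta i == blk beta j & s == tperm i j]]]>>%g.

Definition in_Wbar_up (N : nat) (beta : seq nat) (w : {perm 'I_N}) : Prop :=
  forall u, u \in Wbar_beta N beta -> (len (emb w) <= len (emb (u * w)%g))%N.

(* alpha_i \in w(bar R_+ \ bar R_{beta,+}) *)
Definition eta_cond (N : nat) (beta : seq nat) (w : {perm 'I_N}) (i : 'I_N) : bool :=
  [exists a : 'I_N, exists b : 'I_N,
     [&& (a < b)%N, blk beta a != blk beta b, w a == i & (w b == i.+1 :> nat)]].

(* eta_w: (eta_w, eps_1) = 0 and (eta_w, alpha_i) = -1 if eta_cond i, 0 otherwise,
   i.e. eta_w(j) = #{ i < j | eta_cond i } *)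
Definition eta_w (N : nat) (beta : seq nat) (w : {perm 'I_N}) : lat N :=
  [ffun j : 'I_N => (#|[set i : 'I_N | (i < j)%N & eta_cond beta w i]|)%:Z].

(* bar P_- : (eta, alpha_ij) <= 0 for i < j *)
Definition Pminus (N : nat) (eta : lat N) : Prop :=
  forall i j : 'I_N, (i < j)%N -> eta i <= eta j.

(* X^beta = { t_eta w | w \in bar W^beta, eta \in bar P_-(w) } *)
Definition in_X (N : nat) (beta : seq nat) (x : Welt N) : Prop :=
  exists w : {perm 'I_N}, in_Wbar_up beta w /\
    exists eta : lat N, Pminus eta /\
      x = ([ffun j => eta j + eta_w beta w j], w).

Definition in_Wx (N : nat) (beta : seq nat) (x : Welt N) (u : {perm 'I_N}) : Prop :=
  forall y : Welt N,
    (exists2 v, v \in Wbar_beta N beta & y = wmul (wmul (emb u) x) (emb v)) <->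
    (exists2 v, v \in Wbar_beta N beta & y = wmul x (emb v)).

Definition Wbar_betax (N : nat) (beta : seq nat) (x : Welt N) : {set {perm 'I_N}} :=
  <<[set s : {perm 'I_N} | [exists i : 'I_N, exists j : 'I_N,
      [&& (j == i.+1 :> nat),
        [exists a : 'I_N, exists b : 'I_N,
           [&& (a < b)%N, blk beta a == blk beta b
             & ract x (a, b, 0) == (i, j, 0)]]
        & s == tperm i j]]]>>%g.

From Pilot Require Import Defs.
From mathcomp Require Import finmap boolp classical_sets cardinality.
From mathcomp Require Import all_boot all_order all_algebra all_fingroup.
From mathcomp Require Import zify.
Set Implicit Arguments. Unset Strict Implicit. Unset Printing Implicit Defensive.
Import Order.TTheory GRing.Theory Num.Theory.

(* Write x = t_mu w.  The coset x W_beta is determined by mu and by the block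
   of w^-1 k at each k, so W_[x] is the stabiliser of the key
   k |-> (mu k, block of w^-1 k).  For x in X^beta this key is
   lexicographically nondecreasing: mu is nondecreasing because eta is, and
   eta_w jumps exactly where w^-1 crosses from one block to a later one,
   while minimality of w makes it increasing on each block.  Hence the fibres
   of the key are intervals, and a permutation preserving such a key is a
   product of adjacent transpositions inside the fibres (induction on the
   number of inversions).  These transpositions are exactly the generators
   of W_beta(x). *)

Section OrdinalChains.
Variables (N : nat) (T : Type) (r : rel T) (f : 'I_N -> T).
Hypothesis r_trans : transitive r.

Lemma ord_chain :
  (forall i j : 'I_N, j = i.+1 :> nat -> r (f i) (f j)) ->
  forall i j : 'I_N, (i < j)%N -> r (f i) (f j).
Proof.
move=> step i j lt_ij; pose g n := f (insubd i n).
have g_val (k : 'I_N) : g k = f k by rewrite /g valKd.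
rewrite -g_val -(g_val j); apply: (@homo_ltn_in T [pred n | n < N] g r) => //.
- by move=> m n _ ltnN k /andP[_ ltkn]; apply: ltn_trans ltkn ltnN.
- by move=> n; rewrite !inE => ltnN ltSnN; apply: step; rewrite !val_insubd ltnN ltSnN.
all: by rewrite inE /=.
Qed.

End OrdinalChains.

Section FiberStabilizer.
Variables (N : nat) (T : eqType) (f : 'I_N -> T).

Definition fiber_stab : {set {perm 'I_N}} :=
  [set s : {perm 'I_N} | [forall k, f (s k) == f k]].

Lemma fiber_stabP (s : {perm 'I_N}) :
  reflect (forall k, f (s k) = f k) (s \in fiber_stab).
Proof. by rewrite inE; apply: (iffP forallP) => H k; apply/eqP. Qed.

Lemma fiber_stab_group_set : group_set fiber_stab.
Proof.
apply/group_setP; split; first by apply/fiber_stabP => k; rewrite perm1.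
move=> s t /fiber_stabP fs /fiber_stabP ft.
by apply/fiber_stabP => k; rewrite permM ft fs.
Qed.

Canonical fiber_stab_group := Group fiber_stab_group_set.

Lemma tperm_fiber_stab i j : f i = f j -> tperm i j \in fiber_stab.
Proof. by move=> fij; apply/fiber_stabP => k; case: tpermP => [->|->|]. Qed.

End FiberStabilizer.

Lemma fiber_stab_conj N (T : eqType) (f : 'I_N -> T) (w u : {perm 'I_N}) :
  ((w * u * w^-1)%g \in fiber_stab f) = (u \in fiber_stab (fun k => f (w^-1%g k))).
Proof.
apply/fiber_stabP/fiber_stabP => fs k; last by rewrite !permM fs permK.
by have := fs (w^-1%g k); rewrite !permM permKV.
Qed.

Lemma fiber_stab_pair N (T1 T2 : eqType) (f : 'I_N -> T1) (g : 'I_N -> T2) :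
  fiber_stab (fun k => (f k, g k)) = fiber_stab f :&: fiber_stab g.
Proof.
apply/setP => s; rewrite in_setI; apply/fiber_stabP/andP => [fgs|].
  by split; apply/fiber_stabP => k; case: (fgs k).
by case=> /fiber_stabP fs /fiber_stabP gs k; rewrite fs gs.
Qed.

Section AdjacentTranspositions.
Variable N : nat.
Implicit Types (u w : {perm 'I_N}) (c d : 'I_N).

Definition invs w : {set 'I_N * 'I_N} :=
  [set p : 'I_N * 'I_N | (p.1 < p.2)%N && (w p.2 < w p.1)%N].

Lemma tperm_adj_lt c d (p q : 'I_N) : d = c.+1 :> nat -> (p < q)%N ->
  (p, q) != (c, d) -> (tperm c d p < tperm c d q)%N.
Proof.
have val_t (k : 'I_N) : val (tperm c d k) =
    if val k == val c then val d else if val k == val d then val c else val k.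
  by rewrite !(inj_eq val_inj); case: tpermP => [->|->|/eqP/negbTE-> /eqP/negbTE->];
     rewrite ?eqxx // eq_sym; case: eqP => [->|].
move=> dc lt_pq; rewrite xpair_eqE -!(inj_eq val_inj) !val_t /=.
by do !case: ifP => /eqP ?; lia.
Qed.

Lemma card_invs_tpermM c d w : d = c.+1 :> nat -> (w d < w c)%N ->
  (#|invs (tperm c d * w)| < #|invs w|)%N.
Proof.
move=> dc lt_w; set t := tperm c d; pose tt (p : 'I_N * 'I_N) := (t p.1, t p.2).
have tt_inj : injective tt by move=> [p q] [p' q'] [/perm_inj-> /perm_inj->].
rewrite -(card_imset _ tt_inj); apply: proper_card; apply/properP; split.
- apply/subsetP => _ /imsetP[[p q] + ->].
  rewrite !inE /= !permM => /andP[lt_pq lt_wt].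
  rewrite lt_wt andbT; apply: tperm_adj_lt => //; apply: contraTneq lt_wt => -[-> ->].
  by rewrite /t tpermL tpermR -leqNgt ltnW.
- exists (c, d); first by rewrite inE /= lt_w andbT dc.
  apply/imsetP => -[[p q] + [cp dq]]; rewrite inE /= !permM -cp -dq.
  have -> : p = d by rewrite -(tpermK c d p) -cp tpermL.
  have -> : q = c by rewrite -(tpermK c d q) -dq tpermR.
  by rewrite dc => /andP[]; lia.
Qed.

Lemma perm_incr_eq1 u : (forall c d, d = c.+1 :> nat -> (u c <= u d)%N) -> u = 1%g.
Proof.
move=> u_incr.
have le_u n (k : 'I_N) : k = n :> nat -> (k <= u k)%N.
  elim: n k => [|n IH] k kn; first by rewrite kn.
  have ltnN : (n < N)%N by have := ltn_ord k; lia.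
  have := IH (Ordinal ltnN) erefl; have := u_incr (Ordinal ltnN) k kn.
  have : u k != u (Ordinal ltnN) :> nat.
    by rewrite (inj_eq val_inj) (inj_eq perm_inj) -(inj_eq val_inj) /=; lia.
  move=> /=; lia.
have sum_u : (\sum_(k : 'I_N) (k : nat) <= \sum_(k : 'I_N) (u k : nat)
    ?= iff [forall k : 'I_N, k == u k :> nat])%N.
  apply: leqif_sum => k _; apply/leqifP; case: ifP => [/eqP->//|/negbT neq].
  by rewrite ltn_neqAle neq (le_u _ k erefl).
have := sum_u.2; rewrite (reindex_inj (@perm_inj _ u)) eqxx => /esym /forallP eq_u.
by apply/permP => k; rewrite perm1; apply/val_inj/eqP; rewrite eq_sym eq_u.
Qed.

Lemma perm_descent u : u != 1%g -> exists c d, d = c.+1 :> nat /\ (u d < u c)%N.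
Proof.
apply: contra_neqP => no_descent; apply: perm_incr_eq1 => c d dc.
by rewrite leqNgt; apply/negP => ltu; apply: no_descent; exists c, d.
Qed.

Lemma fiber_stab_adj_gen disp (T : porderType disp) (f : 'I_N -> T)
    (X : {set {perm 'I_N}}) :
  {homo f : i j / (i <= j)%N >-> (i <= j)%O} ->
  X \subset fiber_stab f ->
  (forall c d, d = c.+1 :> nat -> f c = f d -> tperm c d \in <<X>>%g) ->
  <<X>>%g = fiber_stab f.
Proof.
move=> f_homo sXf adj_gen; apply/eqP; rewrite eqEsubset gen_subG sXf /=.
apply/subsetP => u; have [n] := ubnP #|invs u|; elim: n u => // n IH u lt_inv.
move=> /[dup] fu /fiber_stabP fuk.
have [->|/perm_descent[c [d [dc ltu]]]] := eqVneq u 1%g; first exact: group1.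
have fcd : f c = f d.
  have [le_d_uc|lt_uc_d] := leqP d (u c).
    apply/le_anti; rewrite f_homo ?dc //=.
    by rewrite -[X in (_ <= X)%O]fuk f_homo //; lia.
  apply/le_anti; rewrite f_homo ?dc //=.
  by rewrite -fuk f_homo //; lia.
have -> : u = (tperm c d * (tperm c d * u))%g by rewrite mulgA tperm2 mul1g.
rewrite groupM ?adj_gen //; apply: IH.
  by have := card_invs_tpermM dc ltu; lia.
by rewrite groupM // tperm_fiber_stab.
Qed.

End AdjacentTranspositions.

Lemma len_emb N (z : {perm 'I_N}) : len (emb z) = #|invs z|.
Proof.
rewrite /len; pose root0 (p : 'I_N * 'I_N) : aroot N := (p.1, p.2, 0%R).
have root0_inj : injective root0 by move=> [a b] [c d] [-> ->].
have -> : inv_set (emb z) = [set` [fset root0 p | p in invs z]%fset]%classic.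
  apply/seteqP; split => [[[a b] k]|_ /imfsetP[[a b] /= + ->]].
    rewrite /inv_set /is_root /rpos /ract /= !ffunE subrr subr0 => -[ab [pos neg]].
    have zab : z a != z b :> nat by rewrite (inj_eq val_inj) (inj_eq perm_inj).
    have [lt_ab lt_z ->] : [/\ (a < b)%N, (z b < z a)%N & k = 0%R].
      by move: ab zab pos neg; rewrite -(inj_eq val_inj) /=; split; lia.
    by apply/imfsetP; exists (a, b); rewrite // inE /= lt_ab lt_z.
  rewrite inE /= => /andP[lt_ab lt_z].
  rewrite /inv_set /is_root /rpos /ract /= !ffunE subrr ?subr0 -(inj_eq val_inj).
  by rewrite /=; split; [|split]; lia.
by rewrite (set_fsetK [fset root0 p | p in invs z]%fset) card_imfset //= cardE.
Qed.

Lemma blk_homo beta : {homo blk beta : i j / (i <= j)%N}.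
Proof. by move=> i j le_ij; apply: sub_count => p /= le_pi; apply: leq_trans le_ij. Qed.

Lemma Wbar_beta_fiber_stab N beta :
  Wbar_beta N beta = fiber_stab (fun k : 'I_N => blk beta k).
Proof.
apply: fiber_stab_adj_gen => [i j||c d dc bcd]; first exact: blk_homo.
  apply/subsetP => s; rewrite inE.
  by move=> /existsP[i /existsP[j /and3P[_ /eqP bij /eqP->]]]; apply: tperm_fiber_stab.
apply: mem_gen; rewrite inE; apply/existsP; exists c; apply/existsP; exists d.
by apply/and3P; split; apply/eqP.
Qed.

Lemma Wbar_up_adj_lt N beta (w : {perm 'I_N}) (c d : 'I_N) : in_Wbar_up beta w ->
  d = c.+1 :> nat -> blk beta c = blk beta d -> (w c < w d)%N.
Proof.
move=> w_min dc bcd; have w_cd : w c != w d.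
  by rewrite (inj_eq perm_inj); apply/eqP => cd; move: dc; rewrite cd; lia.
rewrite ltn_neqAle (inj_eq val_inj) w_cd leqNgt; apply/negP => lt_w.
have /w_min : tperm c d \in Wbar_beta N beta.
  by rewrite Wbar_beta_fiber_stab tperm_fiber_stab.
by rewrite !len_emb leqNgt card_invs_tpermM.
Qed.

Lemma Wbar_up_incr N beta (w : {perm 'I_N}) (a b : 'I_N) : in_Wbar_up beta w ->
  (a < b)%N -> blk beta a = blk beta b -> (w a < w b)%N.
Proof.
move=> w_min lt_ab bab; pose key (k : 'I_N) : nat *l nat := (blk beta k, w k : nat).
suff : (key a < key b)%O by rewrite ltxi_pair bab lexx ltEnat.
apply: (ord_chain (@lt_trans _ _)) => // c d dc.
have le_cd : (blk beta c <= blk beta d)%N by rewrite blk_homo // dc.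
rewrite ltxi_pair leEnat ltEnat le_cd /=; apply/implyP => le_dc.
by apply: (Wbar_up_adj_lt w_min dc); apply/anti_leq; rewrite le_cd.
Qed.

(* The block component is ordered dually, so that the key is nondecreasing
   on X^beta (see coset_key_homo). *)
Definition coset_key N beta (x : Welt N) (k : 'I_N) : int *l nat^d :=
  (x.1 k, blk beta (x.2^-1%g k)).

Lemma in_Wx_fiber_stab N beta (x : Welt N) (u : {perm 'I_N}) :
  in_Wx beta x u <-> u \in fiber_stab (coset_key beta x).
Proof.
have -> : fiber_stab (coset_key beta x) =
    fiber_stab (fun k => (x.1 k, blk beta (x.2^-1%g k))) by [].
rewrite fiber_stab_pair in_setI -(fiber_stab_conj (fun k : 'I_N => blk beta k)).
rewrite -Wbar_beta_fiber_stab.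
case: x => mu w /=; split.
- move=> Wx.
  have [_ /(_ (ex_intro2 _ _ 1%g (group1 _) erefl))[v Wv]] :=
    Wx (wmul (mu, w) (emb 1%g)).
  rewrite /wmul /emb /= mul1g => -[/ffunP mu_u wuv].
  have -> : (w * u * w^-1 = v^-1)%g.
    by apply: (mulIg w); rewrite mulgKV -[(w * u)%g](mulKg v) -wuv.
  rewrite groupV Wv andbT -groupV; apply/fiber_stabP => k.
  by have := mu_u k; rewrite !ffunE /= !addr0 add0r.
- move=> /andP[mu_u Wu] y; rewrite -groupV in mu_u; move/fiber_stabP: mu_u => mu_u.
  have wmul_emb v :
      wmul (wmul (emb u) (mu, w)) (emb v) = wmul (mu, w) (emb (v * (w * u * w^-1))).
    rewrite /wmul /emb /=; congr pair; last by rewrite -mulgA mulgKV.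
    by apply/ffunP => j; rewrite !ffunE /= mu_u !addr0 add0r.
  split=> -[v Wv ->].
    by exists (v * (w * u * w^-1))%g; [rewrite groupM | rewrite wmul_emb].
  exists (v * (w * u * w^-1)^-1)%g; first by rewrite groupM ?groupV.
  by rewrite wmul_emb mulgKV.
Qed.

Local Open Scope ring_scope.

Lemma eta_wS N beta (w : {perm 'I_N}) (p q : 'I_N) : q = p.+1 :> nat ->
  eta_w beta w q = eta_w beta w p + (eta_cond beta w p : nat)%:Z.
Proof.
move=> qp; rewrite !ffunE -PoszD addnC (cardsD1 p) inE qp ltnSn /=.
congr (Posz (_ + _)).
by apply: eq_card => i; rewrite !inE ltnS ltn_neqAle (inj_eq val_inj) andbA.
Qed.

Lemma coset_key_step N beta (w : {perm 'I_N}) (eta : lat N) (p q : 'I_N) :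
  Pminus eta -> q = p.+1 :> nat ->
  (coset_key beta ([ffun j => eta j + eta_w beta w j], w) p <=
   coset_key beta ([ffun j => eta j + eta_w beta w j], w) q)%O.
Proof.
move=> eta_homo qp.
have mu_def k : [ffun j => eta j + eta_w beta w j] k = eta k + eta_w beta w k.
  by rewrite ffunE.
rewrite /coset_key lexi_pair /= !mu_def (eta_wS _ _ qp).
have le_eta : eta p <= eta q by apply: eta_homo; rewrite qp.
apply/andP; split; first by lia.
apply/implyP => le_mu; rewrite leEdual.
have no_cond : ~~ eta_cond beta w p.
  by apply/negP => cond; move: le_mu; rewrite cond; lia.
case: (ltngtP (w^-1%g q) (w^-1%g p)) => [/ltnW/blk_homo //|lt_pq|/val_inj/perm_inj qp'].
  apply: eq_leq; apply: contraNeq no_cond => neq.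
  apply/existsP; exists (w^-1%g p); apply/existsP; exists (w^-1%g q).
  by rewrite lt_pq eq_sym neq !permKV eqxx qp eqxx.
by move: qp; rewrite qp'; lia.
Qed.

Lemma coset_key_homo N beta (x : Welt N) : in_X beta x ->
  {homo coset_key beta x : i j / (i <= j)%N >-> (i <= j)%O}.
Proof.
case=> w [_ [eta [eta_homo ->]]] i j; rewrite leq_eqVlt => /orP[/eqP/val_inj->//|].
by apply: (ord_chain (@le_trans _ _)) => c d; apply: coset_key_step.
Qed.

Lemma Wbar_betax_fiber_stab N beta (x : Welt N) : in_X beta x ->
  Wbar_betax beta x = fiber_stab (coset_key beta x).
Proof.
move=> /[dup] /coset_key_homo key_homo [w [w_min [eta [_ x_def]]]].
apply: fiber_stab_adj_gen => // [|c d dc].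
  apply/subsetP => s; rewrite inE => /existsP[i /existsP[j /and3P[_ + /eqP->]]].
  move=> /existsP[a /existsP[b /and3P[_ /eqP bab /eqP[<- <- mu_ab]]]].
  apply: tperm_fiber_stab; rewrite /coset_key !permK bab; congr pair.
  by move: mu_ab; lia.
have x2 : x.2 = w by rewrite x_def.
rewrite /coset_key x2 => -[mu_cd b_cd].
have lt_cd : (w^-1%g c < w^-1%g d)%N.
  case: ltngtP => // [lt_dc|/val_inj/perm_inj cd]; last by move: dc; rewrite cd; lia.
  by have := Wbar_up_incr w_min lt_dc (esym b_cd); rewrite !permKV dc; lia.
apply: mem_gen; rewrite inE; apply/existsP; exists c; apply/existsP; exists d.
apply/and3P; split => //; first by apply/eqP.
apply/existsP; exists (w^-1%g c); apply/existsP; exists (w^-1%g d).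
by rewrite lt_cd b_cd eqxx /Defs.ract /= x2 !permKV mu_cd subrr subr0.
Qed.

Theorem proposition2p17 (N : nat) (hN : (2 <= N)%N) (beta : seq nat)
  (hbeta : ordered_partition beta N) (x : Welt N) (hx : in_X beta x) :
  forall u : {perm 'I_N}, in_Wx beta x u <-> u \in Wbar_betax beta x.
Proof.
by move=> u; rewrite in_Wx_fiber_stab (Wbar_betax_fiber_stab hx).
Qed.
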